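(* Let $k\ge2$ and let $G=(\{a,b\},\varphi,a)$ be a circular D0L-system with $\varphi$ $k$-uniform, and suppose the graph of overhangs $GO_G$ contains two distinct vertices $s_1,s_2$ with an edge from $s_1$ to $s_2$ labelled $(\varphi(a),\varphi(a),\ell)$ and an edge from $s_2$ to $s_1$ labelled $(\varphi(b),\varphi(b),\ell)$. Let $R_{ab}=\max\{m: (ab)^m\in S(L(G))\}$, $R_{ba}=\max\{m:(ba)^m\in S(L(G))\}$ and $R_2=\min\{R_{ab},R_{ba}\}$. Then $R_2\le \frac{k-2}{2}$.
   Context: A D0L-system $G=(\mathcal{A},\varphi,w)$ has $L(G)=\{\varphi^n(w)\}$ and $S(L(G))$ the set of factors of its words. An interpretation of $u\in S(L(G))$ is $(p,v,s)$ with $v\in S(L(G))$, $\varphi(v)=pus$. With $v=v_1\cdots v_n$, $v'=v'_1\cdots v'_m$, $u=u_1\cdots u_\ell$, interpretations $(p,v,s),(p',v',s')$ are synchronized at position $j$ if $\varphi(v_1\cdots v_i)=pu_1\cdots u_j$ and $\varphi(v'_1\cdots v'_{i'})=p'u_1\cdots u_j$ for some $i,i'$; $u$ has a synchronizing point at $j$ if all its interpretations are pairwise synchronized at $j$. A PD0L-system injective on $S(L(G))$ is circular if there is $Z$ such that every $u\in S(L(G))$ with $|u|>Z$ has a synchronizing point. $\varphi$ is $k$-uniform if $|\varphi(a)|=|\varphi(b)|=k$. Let $X=\{\varphi(a),\varphi(b)\}$. An overhang is a triple $(u_1\cdots u_m,v_1\cdots v_n,|x|)$ with $u_i,v_j\in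 X$, $x$ nonempty, such that: (i) $x$ is a suffix of $u_1\cdots u_m$ but not of $u_2\cdots u_m$; (ii) $x$ is a prefix of $v_1\cdots v_n$ but not of $v_1\cdots v_{n-1}$; (iii) $x\ne u_1\cdots u_m$ or $x\ne v_1\cdots v_n$; (iv) $|v_1\cdots v_{n-1}|<|x(u_2\cdots u_m)^{-1}|$. Its left overhang is $u_1\cdots u_mx^{-1}$, right overhang $x^{-1}v_1\cdots v_n$. $GO_G$ has an edge from $s_1$ to $s_2$ labelled by each overhang with left overhang $s_1$ and right overhang $s_2$. *)

From mathcomp Require Import all_boot.
Set Implicit Arguments. Unset Strict Implicit. Unset Printing Implicit Defensive.

Definition la : bool := false.
Definition lb : bool := true.

Definition phiw (phi : bool -> seq bool) (w : seq bool) : seq bool :=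
  flatten (map phi w).

(* w \in S(L(G)) for G = ({a,b}, phi, a): w is a factor of some phi^n(a) *)
Definition inS (phi : bool -> seq bool) (w : seq bool) : Prop :=
  exists n, infix w (iter n (phiw phi) [:: la]).

Definition interp phi (u p v s : seq bool) : Prop :=
  inS phi v /\ phiw phi v = p ++ u ++ s.

Definition sync_at phi (u p v p' v' : seq bool) (j : nat) : Prop :=
  (exists i, phiw phi (take i v) = p ++ take j u) /\
  (exists i', phiw phi (take i' v') = p' ++ take j u).

Definition sync_point phi (u : seq bool) (j : nat) : Prop :=
  forall p v s p' v' s',
    interp phi u p v s -> interp phi u p' v' s' -> sync_at phi u p v p' v' j.

Definition circular (phi : bool -> seq bool) : Prop :=
  (forall x, phi x != [::]) /\
  (forall v w, inS phi v -> inS phi w -> phiw phi v = phiw phi w -> v = w) /\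
  exists Z : nat, forall u, inS phi u -> Z < size u ->
    exists j, j <= size u /\ sync_point phi u j.

Definition uniform (phi : bool -> seq bool) (k : nat) : Prop :=
  forall x, size (phi x) = k.

Definition inX (phi : bool -> seq bool) (w : seq bool) : bool :=
  (w == phi la) || (w == phi lb).

(* (u_1..u_m, v_1..v_n, l) is an overhang, with us = [u_1;..;u_m], vs = [v_1;..;v_n] *)
Definition is_overhang phi (us vs : seq (seq bool)) (l : nat) : Prop :=
  us != [::] /\ vs != [::] /\ all (inX phi) us /\ all (inX phi) vs /\
  exists x : seq bool, size x = l /\ x != [::] /\
    (suffix x (flatten us) /\ ~~ suffix x (flatten (behead us))) /\
    (prefix x (flatten vs) /\ ~~ prefix x (flatten (take (size vs).-1 vs))) /\
    (x != flatten us \/ x != flatten vs) /\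
    size (flatten (take (size vs).-1 vs)) < size x - size (flatten (behead us)).

Definition left_overhang (us : seq (seq bool)) (l : nat) : seq bool :=
  take (size (flatten us) - l) (flatten us).

Definition right_overhang (vs : seq (seq bool)) (l : nat) : seq bool :=
  drop l (flatten vs).

Definition GO_edge phi (s1 s2 : seq bool) (U V : seq bool) (l : nat) : Prop :=
  exists us vs, flatten us = U /\ flatten vs = V /\ is_overhang phi us vs l /\
    left_overhang us l = s1 /\ right_overhang vs l = s2.

Definition pow_ab (m : nat) : seq bool := flatten (nseq m [:: la; lb]).
Definition pow_ba (m : nat) : seq bool := flatten (nseq m [:: lb; la]).

From mathcomp Require Import all_boot zify.

(* The two loops of GO_G say that phi(a) = s1 x = x s2 and phi(b) = s2 y = y s1
   with |x| = |y| = l. Hence phi(a) and phi(b) are factors of one sequence F with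
   periods k - l and 2l but not l, which forces k - l to be even.
   If (ab)^m with 2m > k - 2 occurs, an alternating window of length k (k - 1
   for odd k) lies in at most two consecutive blocks of some phi(w), and this
   forces F to alternate. Then l and k are odd and phi(a), phi(b) are
   complementary alternating words, so alternating factors of every length
   occur. But an alternating factor has two interpretations shifted by one
   letter, which never synchronize since k >= 2: phi is not circular. *)

Section Morphism.
Variable phi : bool -> seq bool.

Lemma phiw_cat u v : phiw phi (u ++ v) = phiw phi u ++ phiw phi v.
Proof. by rewrite /phiw map_cat flatten_cat. Qed.

Lemma phiw_cons c v : phiw phi (c :: v) = phi c ++ phiw phi v.
Proof. by []. Qed.

Lemma size_phiw k w : uniform phi k -> size (phiw phi w) = size w * k.
Proof. by move=> unif; elim: w => //= c w IH; rewrite size_cat IH unif mulSn. Qed.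

Lemma nth_phiw k w q j : uniform phi k -> q < size w -> j < k ->
  nth false (phiw phi w) (q * k + j) = nth false (phi (nth false w q)) j.
Proof.
move=> unif; elim: w q => [|c w IH] [|q] //= q_lt j_lt; rewrite nth_cat unif.
  by rewrite j_lt.
by rewrite mulSn -addnA ltnNge leq_addr /= addKn IH.
Qed.

Lemma inS_infix u w : inS phi w -> infix u w -> inS phi u.
Proof. by move=> [n w_n] uw; exists n; exact: infix_trans uw w_n. Qed.

Lemma infix_phiw u w : infix u w -> infix (phiw phi u) (phiw phi w).
Proof.
move/infixP=> [s [s' ->]]; apply/infixP; exists (phiw phi s), (phiw phi s').
by rewrite !phiw_cat.
Qed.

Lemma inS_phiw w : inS phi w -> inS phi (phiw phi w).
Proof. by move=> [n w_n]; exists n.+1; rewrite iterS; exact: infix_phiw. Qed.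

Lemma inS_infix_phiw u : inS phi u -> 1 < size u ->
  exists w, infix u (phiw phi w).
Proof.
move=> [[|n] u_n] u_gt1; last by exists (iter n (phiw phi) [:: la]).
by move/size_infix: u_n; rewrite leqNgt u_gt1.
Qed.

End Morphism.

Definition periodic {T} (F : nat -> T) p := forall n, F (n + p) = F n.

Lemma periodicM {T} {F : nat -> T} {p} c : periodic F p -> periodic F (c * p).
Proof.
by move=> F_p n; elim: c => [|c IH]; rewrite ?addn0 // mulSn addnCA addnC F_p.
Qed.

Lemma periodic_half {T} (F : nat -> T) d l :
  odd d -> periodic F d -> periodic F (2 * l) -> periodic F l.
Proof.
move=> d_odd F_d F_2l n.
rewrite -(periodicM d./2 F_2l) -[in RHS](periodicM l F_d); congr F.
have := odd_double_half d; rewrite d_odd -muln2; nia.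
Qed.

Definition alternating (F : nat -> bool) := forall n, F n.+1 = ~~ F n.

Lemma alternatingE {F} n : alternating F -> F n = F 0 (+) odd n.
Proof. by move=> F_alt; elim: n => [|n IH]; rewrite ?addbF // F_alt IH addbN. Qed.

Definition alt_run (G : nat -> bool) a n :=
  forall i, i.+1 < n -> G (a + i.+1) = ~~ G (a + i).

Lemma alt_run_sub {G a b m n} : a <= b -> b + m <= a + n ->
  alt_run G a n -> alt_run G b m.
Proof.
move=> le_ab le_mn run i lt_i.
have -> : b + i.+1 = a + (b - a + i).+1 by lia.
have -> : b + i = a + (b - a + i) by lia.
by apply: run; lia.
Qed.

Lemma alt_run_eq {G H a b n} : (forall i, i < n -> G (a + i) = H (b + i)) ->
  alt_run G a n -> alt_run H b n.
Proof. by move=> GH run i lt_i; rewrite -!GH ?run //; lia. Qed.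

Lemma alt_runE {G a n i} : alt_run G a n -> i < n -> G (a + i) = G a (+) odd i.
Proof.
move=> run; elim: i => [|i IH] lt_i; first by rewrite addn0 addbF.
by rewrite run // IH ?(ltnW lt_i) // addbN.
Qed.

Lemma alternating_of_alt_run {G d a} : 0 < d -> ~~ odd d -> periodic G d ->
  alt_run G a d -> alternating G.
Proof.
move=> d_gt0 d_even G_d run.
have G_a x : G (a + x) = G a (+) odd x.
  rewrite {1 2}(divn_eq x d) addnA addnAC (periodicM _ G_d) (alt_runE run) ?ltn_mod //.
  by rewrite oddD oddM (negbTE d_even) andbF.
move=> n; rewrite -(periodicM a G_d n) -(periodicM a G_d n.+1).
have -> : n + a * d = a + (n + a * d - a) by nia.
have -> : n.+1 + a * d = a + (n + a * d - a).+1 by nia.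
by rewrite !G_a /= addbN.
Qed.

Lemma alternating_offset {F p o} : periodic F p -> o <= p ->
  alternating (fun n => F (o + n)) -> alternating F.
Proof.
move=> F_p le_op F_alt n; rewrite -F_p -[in RHS]F_p.
have -> : n.+1 + p = o + (n + p - o).+1 by lia.
by rewrite F_alt; congr (~~ F _); lia.
Qed.

Definition altseq (x : bool) n := mkseq (fun i => x (+) odd i) n.

Lemma size_altseq x n : size (altseq x n) = n.
Proof. exact: size_mkseq. Qed.

Lemma nth_altseq x n i : i < n -> nth false (altseq x n) i = x (+) odd i.
Proof. exact: nth_mkseq. Qed.

Lemma altseq_cat x m n : altseq x (m + n) = altseq x m ++ altseq (x (+) odd m) n.
Proof.
apply: (@eq_from_nth _ false); rewrite ?size_cat !size_altseq // => i lt_i.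
rewrite nth_cat size_altseq; case: ltnP => [lt_im | le_mi].
  by rewrite !nth_altseq.
by rewrite !nth_altseq -?addbA -?oddD ?subnKC //; lia.
Qed.

Lemma altseqS x n : altseq x n.+1 = x :: altseq (~~ x) n.
Proof. by rewrite -add1n altseq_cat /= addbT addbF. Qed.

Lemma alt_run_altseq x n : alt_run (nth false (altseq x n)) 0 n.
Proof. by move=> i lt_i; rewrite !add0n !nth_altseq //= ?addbN //; lia. Qed.

Lemma pow_abE m : pow_ab m = altseq false (2 * m).
Proof.
elim: m => [|m IH]; first by [].
by rewrite mulnS altseq_cat -IH.
Qed.

Lemma GO_edge_sameE phi s1 s2 U l : GO_edge phi s1 s2 U U l ->
  [/\ 0 < l, l < size U, take l U = drop (size U - l) U,
      s1 = take (size U - l) U & s2 = drop l U].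
Proof.
move=> [us [vs [<- [U_vs [overhang [<- <-]]]]]].
have [_ [_ [_ [_ [x [x_l [x_nil [[x_suf _] [[x_pre _] [x_ne _]]]]]]]]]] := overhang.
rewrite /left_overhang /right_overhang U_vs.
have x_neU : x != flatten us by case: x_ne; rewrite ?U_vs.
move: x_suf x_pre; rewrite suffixE prefixE x_l U_vs => /eqP x_suf /eqP x_pre.
have l_gt0 : 0 < l by rewrite -x_l lt0n size_eq0.
have l_lt : l < size (flatten us).
  rewrite ltnNge; apply/negP => le_U; move: x_neU.
  by rewrite -x_pre take_oversize ?eqxx.
by split; rewrite // x_pre x_suf.
Qed.

Definition periodic_ext (A : seq bool) d n := nth false A (n %% d).

Section BorderedBlocks.
Variables (A B : seq bool) (k l : nat).
Let d := k - l.
Let F := periodic_ext A d.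
Hypotheses (sizeA : size A = k) (sizeB : size B = k) (l_gt0 : 0 < l) (l_ltk : l < k).
Hypotheses (borderA : take l A = drop d A) (borderB : take l B = drop d B).
Hypotheses (dropA : drop l A = take d B) (dropB : drop l B = take d A).
Hypothesis prefixes_neq : take d A != take d B.

Let nth_border C i : take l C = drop d C -> d <= i -> i < k ->
  nth false C i = nth false C (i - d).
Proof.
move=> border le_di lt_ik; have lt_il : i - d < l by lia.
by rewrite -(nth_take _ lt_il) border nth_drop subnKC.
Qed.

Lemma periodic_ext_d : periodic F d.
Proof. by move=> n; rewrite /F /periodic_ext modnDr. Qed.

Lemma nth_periodic_extA i : i < k -> nth false A i = F i.
Proof.
elim/ltn_ind: i => i IH lt_ik; case: (ltnP i d) => [lt_id | le_di].
  by rewrite /F /periodic_ext modn_small.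
rewrite nth_border // IH; [by rewrite -periodic_ext_d subnK | lia | lia].
Qed.

Lemma nth_periodic_extB i : i < k -> nth false B i = F (l + i).
Proof.
elim/ltn_ind: i => i IH lt_ik; case: (ltnP i d) => [lt_id | le_di].
  by rewrite -(nth_take _ lt_id) -dropA nth_drop nth_periodic_extA //; lia.
rewrite nth_border // IH; [|lia|lia].
by rewrite -periodic_ext_d -addnA subnK.
Qed.

Lemma periodic_ext_2l : periodic F (2 * l).
Proof.
have F_mod x : F x = F (x %% d) by rewrite /F /periodic_ext modn_mod.
move=> n; rewrite F_mod [in RHS]F_mod -modnDml -F_mod.
have : n %% d < d by rewrite ltn_mod; lia.
move: (n %% d) => r lt_r.
rewrite -(nth_periodic_extA r); last lia.
rewrite -(nth_take _ lt_r) -dropB nth_drop nth_periodic_extB; last lia.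
by rewrite addnA addnn -mul2n addnC.
Qed.

Lemma periodic_ext_not_l : ~ periodic F l.
Proof.
move=> F_l; move/eqP: prefixes_neq; apply.
have le_dk : d <= k by lia.
apply: (@eq_from_nth _ false) => [|i]; rewrite !size_takel ?sizeA ?sizeB // => lt_id.
rewrite !nth_take // nth_periodic_extA ?nth_periodic_extB; try lia.
by rewrite addnC F_l.
Qed.

Lemma bordered_blocks_structure :
  [/\ periodic F d, periodic F (2 * l), ~ periodic F l,
      forall i, i < k -> nth false A i = F i
    & forall i, i < k -> nth false B i = F (l + i)].
Proof.
split; [exact: periodic_ext_d | exact: periodic_ext_2l | exact: periodic_ext_not_l
       | exact: nth_periodic_extA | exact: nth_periodic_extB].
Qed.

End BorderedBlocks.

Lemma GO_edge_cycle_blocks phi k s1 s2 l : uniform phi k -> s1 != s2 ->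
  GO_edge phi s1 s2 (phi la) (phi la) l -> GO_edge phi s2 s1 (phi lb) (phi lb) l ->
  let F := periodic_ext (phi la) (k - l) in
  [/\ 0 < l < k, periodic F (k - l), periodic F (2 * l), ~ periodic F l &
      forall c i, i < k -> nth false (phi c) i = F ((if c then l else 0) + i)].
Proof.
move=> phi_unif s12_neq edge_a edge_b F.
have [l_gt0 l_ltk borderA s1_a s2_a] := GO_edge_sameE _ _ _ _ _ edge_a.
have [_ _ borderB s2_b s1_b] := GO_edge_sameE _ _ _ _ _ edge_b.
rewrite !phi_unif in l_ltk borderA borderB s1_a s2_a s2_b s1_b.
have prefixes_neq : take (k - l) (phi la) != take (k - l) (phi lb) by rewrite -s1_a -s2_b.
have [F_d F_2l F_not_l nth_a nth_b] := bordered_blocks_structure _ _ _ _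
  (phi_unif la) (phi_unif lb) l_gt0 l_ltk borderA borderB
  (etrans (esym s2_a) s2_b) (etrans (esym s1_b) s1_a) prefixes_neq.
split; rewrite ?l_gt0 //.
by case; [exact: nth_b | exact: nth_a].
Qed.

(* V reads a window of N letters of some phiw phi w, starting at position s of
   a block and running on into a next block with the same letter; both blocks
   read the pattern G. *)
Section SplitWindow.
Variables (G V : nat -> bool) (k l s N : nat).
Let d := k - l.
Hypotheses (l_gt0 : 0 < l) (l_ltk : l < k) (s_ltk : s < k).
Hypotheses (G_d : periodic G d) (d_even : ~~ odd d).
Hypotheses (N_def : N = k - odd k) (V_run : alt_run V 0 N).
Hypothesis V_first : forall i, i < N -> s + i < k -> V i = G (s + i).
Hypothesis V_second : forall i, i < N -> k <= s + i -> V i = G (s + i - k).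

Let V_second_shift i : i < N -> k <= s + i -> V i = G (s + i - l).
Proof.
by move=> lt_iN le_k; rewrite V_second // -(G_d (s + i - k)); congr G; lia.
Qed.

Let V_alt i : i.+1 < N -> V i.+1 = ~~ V i.
Proof. exact: V_run. Qed.

Lemma alternating_of_split_window : alternating G.
Proof.
have d_gt0 : 0 < d by lia.
suff [a run] : exists a, alt_run G a d.
  exact: alternating_of_alt_run d_gt0 d_even G_d run.
move: N_def; case k_odd : (odd k) => N_eq; last first.
  exists s => i lt_id; case: (ltnP (s + i.+1) k) => [lt_k | le_k].
    by rewrite -(V_first i.+1) -?(V_first i) ?V_alt //; lia.
  have -> : s + i.+1 = s + (i + l).+1 - l by lia.
  have -> : s + i = s + (i + l) - l by lia.
  by rewrite -!V_second_shift ?V_alt //; lia.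
have l_odd : odd l by move: k_odd; rewrite -(subnK (ltnW l_ltk)) oddD (negbTE d_even).
case: (leqP s l) => [le_sl | lt_ls].
  exists s; apply: (@alt_run_eq V G 0) => [i lt_id|]; first by rewrite add0n V_first //; lia.
  by apply: alt_run_sub V_run; lia.
case: (ltnP d s) => [lt_ds | le_sd].
  exists 0; apply: (@alt_run_eq V G (k - s)) => [i lt_id|].
    by rewrite V_second; try congr G; lia.
  by apply: alt_run_sub V_run; lia.
(* The window covers the end of the first block and at most d letters of the
   second; with l odd the alternation across the boundary contradicts G 0 = G d. *)
exfalso.
have first_run : alt_run G s (k - s).
  apply: (@alt_run_eq V G 0) => [i lt_i|]; first by rewrite V_first //; lia.
  by apply: alt_run_sub V_run; lia.
have G0 : G 0 = G s (+) odd (d - s).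
  by rewrite -(G_d 0) -(alt_runE first_run); [congr G | ]; lia.
have odd_shift : odd (k - s - 1) = odd (d - s).
  have -> : k - s - 1 = (d - s) + (l - 1) by lia.
  have l1_even : odd (l - 1) = false.
    by move: l_odd; rewrite -{1}(subnK l_gt0) addn1 => /= /negbTE.
  by rewrite oddD l1_even addbF.
have straddle : V (k - s) = ~~ V (k - s - 1).
  by rewrite -V_alt; [congr V | ]; lia.
move: straddle; rewrite V_second ?V_first ?(alt_runE first_run) ?odd_shift -?G0; try lia.
by rewrite subnKC ?subnn; [case: (G 0) | lia].
Qed.

End SplitWindow.

Section PhiWindow.
Variables (phi : bool -> seq bool) (k l : nat) (F : nat -> bool).
Let d := k - l.
Hypotheses (phi_unif : uniform phi k) (l_gt0 : 0 < l) (l_ltk : l < k).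
Hypotheses (F_d : periodic F d) (F_2l : periodic F (2 * l)) (d_even : ~~ odd d).
Hypothesis nth_phi : forall c i, i < k -> nth false (phi c) i = F ((if c then l else 0) + i).

(* Across two blocks with different letters F continues without a jump. *)
Let F_offset_shift (c c' : bool) x : c != c' ->
  F ((if c' then l else 0) + x) = F ((if c then l else 0) + k + x).
Proof.
case: c c' => [] [] //= _; first by rewrite -(F_2l x) -(F_d (x + 2 * l)); congr F; lia.
by rewrite -(F_d (l + x)); congr F; lia.
Qed.

Lemma alternating_of_phiw_window w P N : N = k - odd k -> P + N <= size w * k ->
  alt_run (nth false (phiw phi w)) P N -> alternating F.
Proof.
move=> N_def P_bound W_run; set W := nth false (phiw phi w) in W_run.
have k_gt0 : 0 < k by lia.
set q := P %/ k; set s := P %% k.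
have P_eq : P = q * k + s by exact: divn_eq.
have s_lt : s < k by rewrite ltn_mod.
have block q' j : q' < size w -> j < k ->
    W (q' * k + j) = F ((if nth false w q' then l else 0) + j).
  by move=> lt_q' lt_j; rewrite /W nth_phiw // nth_phi.
set o := if nth false w q then l else 0.
have V_first i : i < N -> s + i < k -> W (P + i) = F (o + (s + i)).
  move=> lt_iN lt_k; rewrite P_eq -addnA block //.
  by rewrite -(ltn_pmul2r k_gt0); lia.
have V_second i : i < N -> k <= s + i ->
    W (P + i) = F ((if nth false w q.+1 then l else 0) + (s + i - k)).
  move=> lt_iN le_k; rewrite (_ : P + i = q.+1 * k + (s + i - k)) ?block //.
  - by rewrite -(ltn_pmul2r k_gt0) mulSn; lia.
  - by lia.
  - by rewrite mulSn; lia.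
apply: (alternating_offset F_2l (_ : o <= 2 * l)); first by rewrite /o; case: ifP; lia.
have V_run : alt_run (fun i => W (P + i)) 0 N.
  by apply: (alt_run_eq _ W_run) => i; rewrite add0n.
case: (eqVneq (nth false w q) (nth false w q.+1)) => [same | differ].
  apply: (alternating_of_split_window (fun n => F (o + n)) (fun i => W (P + i))
    k l s N l_gt0 l_ltk s_lt _ d_even N_def V_run V_first).
    by move=> n; rewrite /= addnA F_d.
  by move=> i lt_iN le_k; rewrite V_second // -same.
have d_gt0 : 0 < d by lia.
apply: (alternating_of_alt_run d_gt0 d_even (a := s)); first by move=> n; rewrite addnA F_d.
apply: (@alt_run_sub _ s s d N); try lia.
apply: (alt_run_eq _ V_run) => i lt_iN /=.
case: (ltnP (s + i) k) => [lt_k | le_k]; first by rewrite V_first.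
by rewrite V_second // (F_offset_shift _ _ _ differ) -addnA subnKC.
Qed.

Lemma alternating_of_pow_ab m : k - 2 < 2 * m -> inS phi (pow_ab m) -> alternating F.
Proof.
rewrite pow_abE => m_large ab_m.
have [w] : exists w, infix (altseq false (2 * m)) (phiw phi w).
  by apply: (inS_infix_phiw phi _ ab_m); rewrite size_altseq; lia.
move/infixP=> [pre [suf W_eq]].
have N_le : k - odd k <= 2 * m.
  by have := odd_double_half k; case: (odd k) => /=; lia.
apply: (@alternating_of_phiw_window w (size pre) (k - odd k)) => //.
  rewrite -(size_phiw phi k w phi_unif) W_eq !size_cat size_altseq leq_add2l.
  exact: leq_trans N_le (leq_addr _ _).
have run : alt_run (nth false (phiw phi w)) (size pre) (2 * m).
  have nth_W i : i < 2 * m ->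
      nth false (altseq false (2 * m)) (0 + i) = nth false (phiw phi w) (size pre + i).
    by move=> lt_i; rewrite W_eq nth_cat ltnNge leq_addr /= addKn nth_cat size_altseq lt_i.
  exact: alt_run_eq nth_W (alt_run_altseq false (2 * m)).
by apply: alt_run_sub run; lia.
Qed.

Lemma altseq_blocks_of_alternating : alternating F -> ~ periodic F l ->
  odd k /\ forall c, phi c = altseq (F 0 (+) c) k.
Proof.
move=> F_alt F_not_l.
have l_odd : odd l.
  case l_even: (odd l) => //; case: F_not_l => n.
  by rewrite (alternatingE (n + l) F_alt) (alternatingE n F_alt) oddD l_even addbF.
split; first by rewrite -(subnK (ltnW l_ltk)) oddD (negbTE d_even) l_odd.
move=> c; apply: (@eq_from_nth _ false); first by rewrite phi_unif size_altseq.
rewrite phi_unif => i lt_i; rewrite nth_phi // nth_altseq // (alternatingE _ F_alt).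
by case: c; rewrite /= ?oddD ?l_odd ?addbA.
Qed.

End PhiWindow.

Section AlternatingBlocks.
Variables (phi : bool -> seq bool) (k : nat) (x : bool).
Hypotheses (k_gt1 : 1 < k) (k_odd : odd k).
Hypothesis phi_alt : forall c, phi c = altseq (x (+) c) k.

Lemma phiw_altseq y n : phiw phi (altseq y n) = altseq (x (+) y) (n * k).
Proof.
elim: n y => [|n IH] y; first by rewrite mul0n.
by rewrite altseqS phiw_cons IH phi_alt mulSn altseq_cat k_odd addbT addbN.
Qed.

Lemma inS_altseq_unbounded y M : 0 < M -> inS phi (altseq y M) ->
  forall N, exists z, inS phi (altseq z N).
Proof.
move=> M_gt0 y_M N.
suff [z [M' [N_lt z_M']]] : exists z M', N < M' /\ inS phi (altseq z M').
  exists z; apply: (inS_infix phi _ _ z_M').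
  by rewrite -(subnKC (ltnW N_lt)) altseq_cat; exact: prefix_infix.
elim: N => [|N [z [M' [N_lt z_M']]]]; first by exists y, M.
exists (x (+) z), (M' * k); split; first by nia.
by rewrite -phiw_altseq; exact: inS_phiw.
Qed.

Lemma circular_altseq_bounded : circular phi ->
  exists N, forall z, ~ inS phi (altseq z N).
Proof.
move=> [_ [_ [Z sync]]]; exists Z.+2 => z z_S.
have phi_unif : uniform phi k by move=> c; rewrite phi_alt size_altseq.
set v := altseq (~~ z) Z.+1; set u := phiw phi v.
have v_S : inS phi v.
  by apply: (inS_infix phi _ _ z_S); rewrite altseqS -cat1s; exact: infix_catl (infix_refl v).
have size_u : size u = Z.+1 * k by rewrite (size_phiw _ _ _ phi_unif) size_altseq.
have [j [le_j j_sync]] : exists j, j <= size u /\ sync_point phi u j.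
  by apply: sync; [exact: inS_phiw | rewrite size_u; nia].
(* u = phiw phi v also occurs one letter into the image of z :: v, so a
   synchronizing point j would satisfy both k %| j and k %| j.+1. *)
have interp_v : interp phi u [::] v [::] by split; rewrite ?cats0.
have [s interp_z] : exists s, interp phi u (altseq (x (+) z) 1) (altseq z Z.+2) s.
  exists (altseq (~~ (x (+) z) (+) odd (Z.+1 * k)) (k - 1)); split => //.
  rewrite phiw_altseq (_ : Z.+2 * k = 1 + (Z.+1 * k + (k - 1))); last by nia.
  by rewrite altseq_cat [in LHS]altseq_cat /u phiw_altseq addbT addbN.
have [[i phi_i] [i' phi_i']] := j_sync _ _ _ _ _ _ interp_v interp_z.
have size_phiw_dvd w : k %| size (phiw phi w).
  by rewrite (size_phiw _ _ _ phi_unif) dvdn_mull.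
have k_j : k %| j by move: (size_phiw_dvd (take i v)); rewrite phi_i size_takel.
move: (size_phiw_dvd (take i' (altseq z Z.+2))).
rewrite phi_i' size_cat size_takel // addnC (dvdn_addr _ k_j) size_altseq dvdn1.
by move/eqP=> k1; move: k_gt1; rewrite k1.
Qed.

End AlternatingBlocks.

Theorem mainTheorem11 (phi : bool -> seq bool) (k : nat) (s1 s2 : seq bool) (l : nat) :
  2 <= k -> uniform phi k -> circular phi ->
  s1 != s2 ->
  GO_edge phi s1 s2 (phi la) (phi la) l ->
  GO_edge phi s2 s1 (phi lb) (phi lb) l ->
  (forall m, inS phi (pow_ab m) -> 2 * m <= k - 2) \/
  (forall m, inS phi (pow_ba m) -> 2 * m <= k - 2).
Proof.
move=> k_gt1 phi_unif phi_circ s12_neq edge_a edge_b; left => m ab_m.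
rewrite leqNgt; apply/negP => m_large.
have [/andP [l_gt0 l_ltk] F_d F_2l F_not_l nth_phi] :=
  GO_edge_cycle_blocks _ _ _ _ _ phi_unif s12_neq edge_a edge_b.
set F := periodic_ext (phi la) (k - l) in F_d F_2l F_not_l nth_phi.
have d_even : ~~ odd (k - l) by apply/negP => /periodic_half/(_ F_d F_2l).
have F_alt := alternating_of_pow_ab _ _ _ _ phi_unif l_gt0 l_ltk F_d F_2l d_even
  nth_phi m m_large ab_m.
have [k_odd phi_alt] := altseq_blocks_of_alternating _ _ _ _ phi_unif l_ltk d_even
  nth_phi F_alt F_not_l.
have [N no_alt] := circular_altseq_bounded _ _ _ k_gt1 k_odd phi_alt phi_circ.
have m_gt0 : 0 < 2 * m by lia.
rewrite pow_abE in ab_m.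
have [z z_N] := inS_altseq_unbounded _ _ _ k_gt1 k_odd phi_alt _ _ m_gt0 ab_m N.
exact: no_alt z z_N.
Qed.
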